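(* Fix a dataset $\mathbb D_N$ and a point $x\in\mathcal X$. Let $\lambda_\dagger(x|\mathbb D_N)$ be the minimum eigenvalue of $\mathcal F(x|\mathbb D_N)=\beta^2\Sigma_{L_gB}(x|\mathbb D_N)-\widehat{L_gB}(x|\mathbb D_N)^T\widehat{L_gB}(x|\mathbb D_N)$. Then the GP-CBF-SOCP is feasible at $x$ if and only if $$\begin{bmatrix}\widehat{L_fB}+\gamma(B(x))\\ \widehat{L_gB}^T\end{bmatrix}^T\Sigma_B^{-1}\begin{bmatrix}\widehat{L_fB}+\gamma(B(x))\\ \widehat{L_gB}^T\end{bmatrix}\ge\beta^2$$ holds (all quantities evaluated at $(x|\mathbb D_N)$) and one of the following three cases holds: 1. $\lambda_\dagger(x|\mathbb D_N)<0$; 2. $\lambda_\dagger(x|\mathbb D_N)>0$ and $$\widehat{L_fB}+\gamma(B(x))-\widehat{L_gB}\,\mathcal F^{-1}\Big[\beta^2(\Sigma_{L_gB}^{1/2})^T\Sigma_{L_fB}^{1/2}-\widehat{L_gB}^T\big(\widehat{L_fB}+\gamma(B(x))\big)\Big]\ge0;$$ 3. $\lambda_\dagger(x|\mathbb D_N)=0$ and $$\widehat{L_fB}+\gamma(B(x))-\widehat{L_gB}\,\Sigma_{L_gB}^{-1}(\Sigma_{L_gB}^{1/2})^T\Sigma_{L_fB}^{1/2}>0.$$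
   Context: Consider $\dot x=f(x)+g(x)u$ with $x\in\mathcal X\subset\mathbb R^n$ and $u\in\mathbb R^m$, where $f,g$ are locally Lipschitz and unknown. A nominal model $\tilde f,\tilde g$ is available. Let $B:\mathcal X\to\mathbb R$ be $C^1$, let $\gamma$ be extended class-$\mathcal K_\infty$, and let $u_{\text{ref}}$ be a reference controller. Lie derivatives: $L_{\tilde f}B=\nabla B\,\tilde f$ and $L_{\tilde g}B=\nabla B\,\tilde g\in\mathbb R^{1\times m}$; $L_fB$ and $L_gB$ are defined similarly. Set $\Delta_B(x,u)=(L_fB-L_{\tilde f}B)(x)+(L_gB-L_{\tilde g}B)(x)u$. A dataset $\mathbb D_N=\{((x_j,u_j),z_j)\}$ consists of $z_j=\Delta_B(x_j,u_j)+\epsilon_j$. GP model with the affine dot product kernel $k_c((x,y),(x',y'))=y^T\mathrm{diag}(k_1(x,x'),\dots,k_{m+1}(x,x'))y'$: - Let $y_j=[1,u_j^T]^T$, $\mathbf z=(z_j)$, let $\sigma_n>0$, and let $K_c$ be the Gram matrix on the data. - Let $K_{**}(x)=\mathrm{diag}(k_i(x,x))$, and let $K_{*Y}(x)$ be the $(m+1)\times N$ matrix with entries $k_i(x,x_j)(y_j)_i$. - Define $m_B(x|\mathbb D_N)=K_{*Y}(K_c+\sigma_n^2I)^{-1}\mathbf z$ and $\Sigma_B(x|\mathbb D_N)=K_{**}-K_{*Y}(K_c+\sigma_n^2I)^{-1}K_{*Y}^T$, which is positive definite. - The posterior mean and standard deviation are $\mu_B(x,u|\mathbb D_N)=m_B^T[1;u]$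 and $\sigma_B=\sqrt{[1,u^T]\Sigma_B[1;u]}$. $\beta>0$ is a constant. Derived quantities: - $\widehat{L_fB}=L_{\tilde f}B+(m_B)_1$ and $\widehat{L_gB}=L_{\tilde g}B+((m_B)_2,\dots,(m_B)_{m+1})\in\mathbb R^{1\times m}$. - $\Sigma_B^{1/2}$ is the symmetric positive definite square root of $\Sigma_B$. - $\Sigma_{L_fB}^{1/2}\in\mathbb R^{m+1}$ is the first column of $\Sigma_B^{1/2}$, and $\Sigma_{L_gB}^{1/2}\in\mathbb R^{(m+1)\times m}$ consists of its columns $2,\dots,m+1$. - $\Sigma_{L_gB}=(\Sigma_{L_gB}^{1/2})^T\Sigma_{L_gB}^{1/2}$, which equals the lower-right $m\times m$ block of $\Sigma_B$. The GP-CBF-SOCP at $x$ is: minimize $\|u-u_{\text{ref}}(x)\|_2^2$ subject to $L_{\tilde f}B(x)+L_{\tilde g}B(x)u+\mu_B(x,u|\mathbb D_N)-\beta\sigma_B(x,u|\mathbb D_N)+\gamma(B(x))\ge0$. It is feasible at $x$ if this constraint set is nonempty. *)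

From HB Require Import structures.
From mathcomp Require Import all_boot all_order all_algebra.
Set Implicit Arguments. Unset Strict Implicit. Unset Printing Implicit Defensive.
Import Order.TTheory GRing.Theory Num.Theory.
Local Open Scope ring_scope.

Section GPCBF.
Variable R : rcfType.

Definition posdef (k : nat) (A : 'M[R]_k) : Prop :=
  A^T = A /\ forall v : 'cV[R]_k, v != 0 -> 0 < (v^T *m A *m v) 0 0.

Definition is_min_eigenvalue (k : nat) (F : 'M[R]_k) (lam : R) : Prop :=
  eigenvalue F lam /\ forall mu, eigenvalue F mu -> lam <= mu.

Variables (n m N : nat).
Variable k : 'I_(1 + m) -> 'rV[R]_n -> 'rV[R]_n -> R.
Variable xs : 'I_N -> 'rV[R]_n.
Variable us : 'I_N -> 'cV[R]_m.
Variable z : 'cV[R]_N.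
Variable sigma_n : R.

Definition yj (j : 'I_N) : 'cV[R]_(1 + m) := col_mx 1 (us j).

Definition Kc : 'M[R]_N :=
  \matrix_(i, j) (\sum_(l < 1 + m) yj i l 0 * k l (xs i) (xs j) * yj j l 0).

Definition Kss (x : 'rV[R]_n) : 'M[R]_(1 + m) := \matrix_(i, j) ((i == j)%:R * k i x x).

Definition KsY (x : 'rV[R]_n) : 'M[R]_(1 + m, N) :=
  \matrix_(l, j) (k l x (xs j) * yj j l 0).

Definition mB (x : 'rV[R]_n) : 'cV[R]_(1 + m) :=
  KsY x *m invmx (Kc + sigma_n ^+ 2 *: 1%:M) *m z.

Definition SigmaB (x : 'rV[R]_n) : 'M[R]_(1 + m) :=
  Kss x - KsY x *m invmx (Kc + sigma_n ^+ 2 *: 1%:M) *m (KsY x)^T.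

Definition muB (x : 'rV[R]_n) (u : 'cV[R]_m) : R :=
  ((mB x)^T *m col_mx 1 u) 0 0.

Definition sigmaB (x : 'rV[R]_n) (u : 'cV[R]_m) : R :=
  Num.sqrt (((col_mx 1 u)^T *m SigmaB x *m col_mx 1 u) 0 0).

(* gradB x = \nabla B(x) (a row vector), ft, gt the nominal model *)
Variable B : 'rV[R]_n -> R.
Variable gradB : 'rV[R]_n -> 'rV[R]_n.
Variable ft : 'rV[R]_n -> 'cV[R]_n.
Variable gt : 'rV[R]_n -> 'M[R]_(n, m).
Variable gamma : R -> R.
Variable beta : R.

Definition LftB (x : 'rV[R]_n) : R := (gradB x *m ft x) 0 0.
Definition LgtB (x : 'rV[R]_n) : 'rV[R]_m := gradB x *m gt x.

Definition hatLfB (x : 'rV[R]_n) : R := LftB x + usubmx (mB x) 0 0.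
Definition hatLgB (x : 'rV[R]_n) : 'rV[R]_m := LgtB x + (dsubmx (mB x))^T.

Definition socp_constraint (x : 'rV[R]_n) (u : 'cV[R]_m) : Prop :=
  0 <= LftB x + (LgtB x *m u) 0 0 + muB x u - beta * sigmaB x u + gamma (B x).

Definition socp_feasible (x : 'rV[R]_n) : Prop :=
  exists u : 'cV[R]_m, socp_constraint x u.

End GPCBF.

(* Let S = Sigma_B^(1/2) have first column e and remaining columns P, put
   t(u) = S [1; u] = e + P u, and whiten v = [a; b^T] to c = S^-1 v.  As S is
   symmetric, a + b u = c.t(u), sigma_B(x, u) = |t(u)| and v^T Sigma_B^-1 v =
   |c|^2, so the SOCP is feasible iff beta |t(u)| <= c.t(u) for some u; since
   t(u) never vanishes, Cauchy-Schwarz forces |c| >= beta.  The quadratic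
   q(u) = (c.t(u))^2 - beta^2 |t(u)|^2 has Hessian -2F.  If F has a negative
   eigenvalue, q grows without bound along an eigenvector.  If F is positive
   definite, q is maximal at its stationary point ustar, and feasibility amounts
   to c.t(ustar) >= 0.  If F is singular, a kernel vector yields the orthogonal
   projection g of c onto the range of P, with |g| = beta, and feasibility
   amounts to (c - g).e > 0.  That F is positive definite when its least
   eigenvalue is positive comes from its rank-one structure: a nonpositive
   value of its quadratic form makes det F <= 0, and the intermediate value
   theorem for det (F + s I) then produces a nonpositive eigenvalue. *)

From HB Require Import structures.
From mathcomp Require Import all_boot all_order all_algebra.
From mathcomp Require Import ring lra.
Set Implicit Arguments. Unset Strict Implicit. Unset Printing Implicit Defensive.
Import Order.TTheory GRing.Theory Num.Theory.
Local Open Scope ring_scope.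

Lemma quadratic_eventually_ge0 (R : realFieldType) (A B C : R) : 0 < A ->
  exists s0, forall s, s0 <= s -> 0 <= A * s ^+ 2 + B * s + C.
Proof.
move=> A_gt0; exists (1 + (`|B| + `|C|) / A) => s le_s0s.
have As : A + `|B| + `|C| <= A * s.
  move: le_s0s; rewrite -(ler_pM2l A_gt0) mulrDr mulrCA divff ?gt_eqF //.
  by rewrite !mulr1 addrA.
have s_ge1 : 1 <= s.
  by apply: le_trans le_s0s; rewrite lerDl divr_ge0 ?addr_ge0 // ltW.
have /andP[NB_le _] : - `|B| <= B <= `|B| by rewrite -ler_norml.
have /andP[NC_le _] : - `|C| <= C <= `|C| by rewrite -ler_norml.
have s_ge0 : 0 <= s := le_trans ler01 s_ge1.
have : 0 <= `|C| * (s - 1) by rewrite mulr_ge0 // subr_ge0.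
have := ler_wpM2l s_ge0 As.
nra.
Qed.

Lemma mul_sqrt_le_iff (R : rcfType) (x y N : R) : 0 <= x -> 0 <= N ->
  (x * Num.sqrt N <= y) <-> (0 <= y /\ x ^+ 2 * N <= y ^+ 2).
Proof.
move=> x_ge0 N_ge0; rewrite -[in X in _ /\ X](sqr_sqrtr N_ge0) -exprMn.
have xN_ge0 : 0 <= x * Num.sqrt N by rewrite mulr_ge0 ?sqrtr_ge0.
split=> [le_xy | [y_ge0]]; last by rewrite ler_sqr.
by have y_ge0 := le_trans xN_ge0 le_xy; rewrite ler_sqr.
Qed.

Section InnerProduct.
Variable R : realFieldType.
Implicit Types (k : nat) (a s : R).

Definition dot k (x y : 'cV[R]_k) : R := (x^T *m y) 0 0.

Lemma dotC k (x y : 'cV[R]_k) : dot x y = dot y x.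
Proof. by rewrite /dot -[y^T *m x]trmxK trmx_mul trmxK [in RHS]mxE. Qed.

Lemma dotDr k (x y z : 'cV[R]_k) : dot x (y + z) = dot x y + dot x z.
Proof. by rewrite /dot mulmxDr mxE. Qed.

Lemma dotDl k (x y z : 'cV[R]_k) : dot (x + y) z = dot x z + dot y z.
Proof. by rewrite dotC dotDr !(dotC z). Qed.

Lemma dotZr k a (x y : 'cV[R]_k) : dot x (a *: y) = a * dot x y.
Proof. by rewrite /dot -scalemxAr mxE. Qed.

Lemma dotZl k a (x y : 'cV[R]_k) : dot (a *: x) y = a * dot x y.
Proof. by rewrite dotC dotZr dotC. Qed.

Lemma dotNr k (x y : 'cV[R]_k) : dot x (- y) = - dot x y.
Proof. by rewrite -scaleN1r dotZr mulN1r. Qed.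

Lemma dotBr k (x y z : 'cV[R]_k) : dot x (y - z) = dot x y - dot x z.
Proof. by rewrite dotDr dotNr. Qed.

Lemma dotBl k (x y z : 'cV[R]_k) : dot (x - y) z = dot x z - dot y z.
Proof. by rewrite dotC dotBr !(dotC z). Qed.

Lemma dot0r k (x : 'cV[R]_k) : dot x 0 = 0.
Proof. by rewrite /dot mulmx0 mxE. Qed.

Lemma dot_mulmxr k l (x : 'cV[R]_k) (A : 'M[R]_(k, l)) (y : 'cV[R]_l) :
  dot x (A *m y) = dot (A^T *m x) y.
Proof. by rewrite /dot trmx_mul trmxK mulmxA. Qed.

Lemma dot_rank1 k (w x y z : 'cV[R]_k) : dot w (x *m y^T *m z) = dot w x * dot y z.
Proof.
by rewrite -mulmxA [y^T *m z]mx11_scalar mul_mx_scalar dotZr mulrC.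
Qed.

Lemma dot_expand k s (x y : 'cV[R]_k) :
  dot (x + s *: y) (x + s *: y) = dot x x + 2 * s * dot x y + s ^+ 2 * dot y y.
Proof. by rewrite !dotDl !dotDr !dotZl !dotZr (dotC y x); ring. Qed.

Lemma dot_ge0 k (x : 'cV[R]_k) : 0 <= dot x x.
Proof.
by rewrite /dot mxE sumr_ge0 // => i _; rewrite mxE -expr2 sqr_ge0.
Qed.

Lemma dot_eq0 k (x : 'cV[R]_k) : (dot x x == 0) = (x == 0).
Proof.
apply/idP/eqP => [|->]; last by rewrite dot0r.
rewrite /dot mxE psumr_eq0 => [/allP x0|i _]; last by rewrite mxE -expr2 sqr_ge0.
apply/matrixP => i j; rewrite ord1 mxE.
by have := x0 i (mem_index_enum _); rewrite mxE -expr2 sqrf_eq0 => /eqP.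
Qed.

Lemma dot_gt0 k (x : 'cV[R]_k) : (0 < dot x x) = (x != 0).
Proof. by rewrite lt_def dot_eq0 dot_ge0 andbT. Qed.

Definition posform k (A : 'M[R]_k) := forall w, w != 0 -> 0 < dot w (A *m w).

Lemma posform_ge0 k (A : 'M[R]_k) w : posform A -> 0 <= dot w (A *m w).
Proof. by move=> posA; have [->|/posA/ltW//] := eqVneq w 0; rewrite mulmx0 dot0r. Qed.

Lemma form_cauchy_schwarz k (A : 'M[R]_k) (x y : 'cV[R]_k) :
  A^T = A -> posform A ->
  dot x (A *m y) ^+ 2 <= dot x (A *m x) * dot y (A *m y).
Proof.
move=> symA posA; have [->|y0] := eqVneq y 0.
  by rewrite mulmx0 !dot0r expr0n mulr0.
have Ay := posA y y0; set r := dot x (A *m y) / dot y (A *m y).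
have symf u v : dot u (A *m v) = dot v (A *m u) by rewrite dot_mulmxr symA dotC.
have := posform_ge0 (x - r *: y) posA.
rewrite mulmxBr -scalemxAr dotBl !dotBr !dotZl !dotZr (symf y x) /r => h.
suff: 0 <= dot x (A *m x) - dot x (A *m y) ^+ 2 / dot y (A *m y).
  by rewrite subr_ge0 ler_pdivrMr.
by move: h; congr (_ <= _); field; rewrite gt_eqF.
Qed.

Lemma cauchy_schwarz k (x y : 'cV[R]_k) : dot x y ^+ 2 <= dot x x * dot y y.
Proof.
have := @form_cauchy_schwarz k 1%:M x y (trmx1 _ _).
by rewrite !mul1mx; apply=> w; rewrite mul1mx dot_gt0.
Qed.

Lemma cauchy_schwarz_eq k (x y : 'cV[R]_k) :
  y != 0 -> dot y y * dot x x <= dot x y ^+ 2 -> x = (dot x y / dot y y) *: y.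
Proof.
move=> y0 h; set V := dot y y *: x - dot x y *: y.
have eV : dot V V = dot y y * (dot y y * dot x x - dot x y ^+ 2).
  by rewrite /V !dotBl !dotBr !dotZl !dotZr (dotC y x); ring.
have /eqP : V = 0.
  apply/eqP; rewrite -dot_eq0 eq_le dot_ge0 andbT eV.
  by rewrite pmulr_rle0 ?subr_le0 // dot_gt0.
rewrite subr_eq0 => /eqP/(congr1 ( *:%R (dot y y)^-1)).
by rewrite /= !scalerA mulVf ?dot_eq0 // scale1r mulrC.
Qed.

Lemma det_sub_rank1 k (A : 'M[R]_k) (x y : 'cV[R]_k) : A \in unitmx ->
  \det (A - x *m y^T) = \det A * (1 - dot y (invmx A *m x)).
Proof.
move=> uA; pose M := block_mx A x y^T (1%:M : 'M[R]_1).
have eL : M = block_mx 1%:M x 0 1%:M *m block_mx (A - x *m y^T) 0 y^T 1%:M.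
  by rewrite mulmx_block !mul1mx !mul0mx ?mulmx0 ?mulmx1 ?add0r ?addr0 subrK.
have eU : M = block_mx A 0 y^T 1%:M *m
    block_mx 1%:M (invmx A *m x) 0 (1%:M - y^T *m (invmx A *m x)).
  rewrite mulmx_block !mul1mx !mul0mx ?mulmx0 ?mulmx1 ?add0r ?addr0 mulKVmx //.
  by rewrite addrC subrK.
have := congr1 determinant eU; rewrite {1}eL !det_mulmx.
rewrite det_ublock det_lblock det_lblock det_ublock !det1 !mul1r !mulr1 det_mx11.
by move=> ->; rewrite [in LHS]mxE [in LHS]mxE [in LHS]mxE mulr1n.
Qed.

Lemma quad_invmx_sqr k (S : 'M[R]_k) (v : 'cV[R]_k) : S^T = S -> S \in unitmx ->
  (v^T *m invmx (S *m S) *m v) 0 0 = dot (invmx S *m v) (invmx S *m v).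
Proof.
move=> symS unitS; set y := invmx S *m v.
have vE : v = S *m y by rewrite mulKVmx.
have SSyE : v = S *m S *m (invmx S *m y) by rewrite -mulmxA mulKVmx.
rewrite -mulmxA {2}SSyE mulKmx ?unitmx_mul ?unitS // vE trmx_mul symS.
by rewrite -mulmxA mulKVmx.
Qed.

Lemma col_mx_sym_mulmxE m (S : 'M[R]_(1 + m)) (v : 'cV[R]_(1 + m)) a (b : 'rV[R]_m) :
  S^T = S -> col_mx (a%:M : 'M_1) b^T = S *m v ->
  a = dot v (lsubmx S) /\ b = v^T *m rsubmx S.
Proof.
move=> symS /(congr1 trmx); rewrite tr_col_mx trmxK trmx_mul symS.
rewrite -{1}(hsubmxK S) mul_mx_row tr_scalar_mx => /eq_row_mx [aE ->]; split=> //.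
by move/matrixP: aE => /(_ 0 0); rewrite mxE mulr1n.
Qed.

End InnerProduct.

Section PositiveDefinite.
Variable R : rcfType.

Lemma posdefP k (A : 'M[R]_k) : posdef A <-> A^T = A /\ posform A.
Proof.
by rewrite /posdef /posform /dot; split=> -[-> pA]; split=> // w /pA;
  rewrite mulmxA.
Qed.

Lemma posdefZ k s (A : 'M[R]_k) : 0 < s -> posdef A -> posdef (s *: A).
Proof.
move=> s_gt0 /posdefP [symA posA]; apply/posdefP; split; first by rewrite linearZ /= symA.
by move=> w /posA; rewrite -scalemxAl dotZr; apply: mulr_gt0.
Qed.

Lemma det_ivt k (A C : 'M[R]_k) : \det A <= 0 -> 0 < \det C ->
  exists2 s, 0 <= s <= 1 & \det ((1 - s) *: A + s *: C) = 0.
Proof.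
move=> A_le0 C_gt0.
pose M : 'M[{poly R}]_k := \matrix_(i, j) ((1 - 'X) * (A i j)%:P + 'X * (C i j)%:P).
have evalM s : (\det M).[s] = \det ((1 - s) *: A + s *: C).
  rewrite -horner_evalE -det_map_mx; congr (\det _); apply/matrixP => i j.
  by rewrite !mxE /= horner_evalE !hornerE.
have : (\det M).[0] <= 0 <= (\det M).[1].
  by rewrite !evalM subr0 subrr !scale0r !scale1r addr0 add0r A_le0 ltW.
case/(poly_ivt ler01) => s /andP[s0 s1] /rootP detM0.
by exists s; rewrite ?s0 -?evalM.
Qed.

(* Along the segment from [A] to [1], a vanishing determinant would give a
   nonzero [w] with [(1 - s) w.Aw + s |w|^2 = 0]. *)
Lemma posform_det_gt0 k (A : 'M[R]_k) : posform A -> 0 < \det A.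
Proof.
move=> posA; rewrite ltNge; apply/negP => A_le0.
have det1_gt0 : 0 < \det (1%:M : 'M[R]_k) by rewrite det1 ltr01.
have [s /andP[s0 s1]] := det_ivt A_le0 det1_gt0.
move/eqP/det0P => [v v0 vM]; have w0 : v^T != 0 by rewrite trmx_eq0.
have : dot v^T (((1 - s) *: A + s *: 1%:M) *m v^T) = 0.
  by rewrite /dot trmxK mulmxA vM mul0mx mxE.
rewrite mulmxDl -!scalemxAl mul1mx dotDr !dotZr.
by have := posA _ w0; have := dot_gt0 v^T; rewrite w0; nra.
Qed.

Lemma posform_unitmx k (A : 'M[R]_k) : posform A -> A \in unitmx.
Proof. by move/posform_det_gt0; rewrite unitmxE unitfE => /gt_eqF ->. Qed.

Lemma eigenvalue_le0_of_det k (F : 'M[R]_k) t : 0 <= t ->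
  \det F <= 0 -> 0 < \det (F + t%:M) -> exists2 mu, mu <= 0 & eigenvalue F mu.
Proof.
move=> t0 F_le0 Ft_gt0; have [s /andP[s0 _]] := det_ivt F_le0 Ft_gt0.
have -> : (1 - s) *: F + s *: (F + t%:M) = F - (- (s * t))%:M.
  by rewrite scalerDr scalerBl scale1r addrA subrK scale_scalar_mx raddfN opprK.
move/eqP/det0P => [v v0 /eqP]; rewrite mulmxBr mul_mx_scalar subr_eq0 => /eqP vF.
by exists (- (s * t)); [rewrite oppr_le0 mulr_ge0 | apply/eigenvalueP; exists v].
Qed.

Lemma eigenvalue_col k (A : 'M[R]_k) mu : A^T = A -> eigenvalue A mu ->
  exists2 p : 'cV[R]_k, p != 0 & A *m p = mu *: p.
Proof.
move=> symA /eigenvalueP [v vA v0]; exists v^T; first by rewrite trmx_eq0.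
by rewrite -{1}symA -trmx_mul vA linearZ.
Qed.

(* Cauchy-Schwarz for the [A]-form turns [w.Aw <= (x.w)^2] into
   [x.A^-1 x >= 1], i.e. [det (A - x x^T) <= 0], while adding [(|x|^2 + 1) I]
   makes the matrix positive definite. *)
Lemma sub_rank1_eigenvalue_le0 k (A : 'M[R]_k) (x w : 'cV[R]_k) :
  posdef A -> w != 0 -> dot w ((A - x *m x^T) *m w) <= 0 ->
  exists2 mu, mu <= 0 & eigenvalue (A - x *m x^T) mu.
Proof.
move=> /posdefP [symA posA] w0 Fw; set F := A - x *m x^T.
have quadF y : dot y (F *m y) = dot y (A *m y) - dot y x ^+ 2.
  by rewrite mulmxBl dotBr dot_rank1 (dotC x) expr2.
have uA := posform_unitmx posA; set r := invmx A *m x.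
have Ar : A *m r = x by rewrite mulKVmx.
have xw : dot w x = dot r (A *m w) by rewrite -Ar dotC dot_mulmxr symA.
have xr : dot x r = dot r (A *m r) by rewrite Ar dotC.
have F_le0 : \det F <= 0.
  rewrite /F det_sub_rank1 // -/r xr pmulr_rle0 ?posform_det_gt0 // subr_le0.
  have := form_cauchy_schwarz r w symA posA; rewrite -xw => cs.
  have Aw := posA w w0; rewrite quadF subr_le0 in Fw.
  by rewrite -(ler_pM2r Aw) mul1r; apply: le_trans Fw cs.
apply: (eigenvalue_le0_of_det (t := dot x x + 1)) F_le0 _.
  by rewrite addr_ge0 ?dot_ge0.
apply: posform_det_gt0 => y y0.
rewrite mulmxDl mul_scalar_mx dotDr dotZr quadF.
have := posA y y0; have := dot_gt0 y; rewrite y0 (dotC y x).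
by have := cauchy_schwarz x y; have := dot_ge0 x; nra.
Qed.

End PositiveDefinite.

Section SecondOrderCone.
Variables (R : rcfType) (m : nat) (beta : R) (S : 'M[R]_(1 + m)).
Variables (c : 'cV[R]_(1 + m)) (a : R) (b : 'rV[R]_m).
Hypotheses (beta_gt0 : 0 < beta) (unitS : S \in unitmx).
Local Notation e := (lsubmx S).
Local Notation P := (rsubmx S).
Local Notation t u := (e + P *m u).
Hypotheses (aE : a = dot c e) (bE : b = c^T *m P).
Local Notation G := (P^T *m P).
Local Notation F := (beta ^+ 2 *: G - b^T *m b).

Lemma mulS_colE (x : 'cV[R]_(1 + m)) : S *m x = usubmx x 0 0 *: e + P *m dsubmx x.
Proof.
rewrite -{1}(hsubmxK S) -{1}(vsubmxK x) mul_row_col.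
by rewrite [usubmx x]mx11_scalar mul_mx_scalar [_%:M 0 0]mxE mulr1n.
Qed.

Lemma mulS_col1 (u : 'cV[R]_m) : S *m col_mx 1 u = t u.
Proof. by rewrite mulS_colE col_mxKu col_mxKd mxE eqxx scale1r. Qed.

Lemma t_neq0 (u : 'cV[R]_m) : t u != 0.
Proof.
rewrite -mulS_col1; apply: contraTneq isT => /(congr1 (mulmx (invmx S))).
rewrite mulKmx // mulmx0 => /(congr1 usubmx); rewrite col_mxKu linear0.
by move/matrixP/(_ 0 0); rewrite !mxE /= => /eqP; rewrite oner_eq0.
Qed.

Lemma mulP_eq0 (w : 'cV[R]_m) : (P *m w == 0) = (w == 0).
Proof.
apply/eqP/eqP => [Pw0|->]; last by rewrite mulmx0.
have : S *m col_mx (0 : 'cV[R]_1) w = 0.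
  by rewrite mulS_colE col_mxKu col_mxKd Pw0 mxE scale0r addr0.
move/(congr1 (mulmx (invmx S))); rewrite mulKmx // mulmx0 => /(congr1 dsubmx).
by rewrite col_mxKd linear0.
Qed.

Lemma G_posdef : posdef G.
Proof.
apply/posdefP; split=> [|w w0]; first by rewrite trmx_mul trmxK.
by rewrite -mulmxA dot_mulmxr trmxK dot_gt0 mulP_eq0.
Qed.

Lemma mulb_dot (u : 'cV[R]_m) : (b *m u) 0 0 = dot c (P *m u).
Proof. by rewrite bE -mulmxA. Qed.

Lemma trmx_b : b^T = P^T *m c.
Proof. by rewrite bE trmx_mul trmxK. Qed.

Lemma dot_c_tE (u : 'cV[R]_m) : dot c (t u) = a + (b *m u) 0 0.
Proof. by rewrite mulb_dot dotDr aE. Qed.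

Lemma mul_bTb (w : 'cV[R]_m) : b^T *m b *m w = dot c (P *m w) *: (P^T *m c).
Proof. by rewrite -mulmxA [b *m w]mx11_scalar mul_mx_scalar mulb_dot trmx_b. Qed.

Lemma dot_F (w z : 'cV[R]_m) :
  dot w (F *m z) = beta ^+ 2 * dot (P *m w) (P *m z) - dot c (P *m w) * dot c (P *m z).
Proof.
rewrite mulmxBl -scalemxAl dotBr dotZr -mulmxA dot_mulmxr trmxK mul_bTb dotZr.
by rewrite [dot w _]dot_mulmxr trmxK (dotC (P *m w) c) [in X in _ - X]mulrC.
Qed.

Lemma symF : F^T = F.
Proof. by rewrite linearB /= linearZ /= !trmx_mul !trmxK. Qed.

Definition q (u : 'cV[R]_m) := dot c (t u) ^+ 2 - beta ^+ 2 * dot (t u) (t u).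

Definition feasible := exists u, 0 <= dot c (t u) /\ 0 <= q u.

Lemma feasibleE : feasible <->
  exists u, beta * Num.sqrt (dot (S *m col_mx 1 u) (S *m col_mx 1 u)) <= a + (b *m u) 0 0.
Proof.
have iff_u (u : 'cV[R]_m) : beta * Num.sqrt (dot (S *m col_mx 1 u) (S *m col_mx 1 u)) <=
    a + (b *m u) 0 0 <-> 0 <= dot c (t u) /\ 0 <= q u.
  rewrite mulS_col1 -dot_c_tE /q subr_ge0.
  by apply: mul_sqrt_le_iff; rewrite ?dot_ge0 ?ltW.
by split=> -[u /iff_u]; exists u.
Qed.

Lemma q_lt0 (u : 'cV[R]_m) : dot c (t u) = 0 -> q u < 0.
Proof.
by rewrite /q => ->; rewrite expr0n sub0r oppr_lt0 mulr_gt0 ?exprn_gt0 ?dot_gt0 ?t_neq0.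
Qed.

Lemma feasible_norm : feasible -> beta ^+ 2 <= dot c c.
Proof.
move=> [u [_]]; rewrite /q subr_ge0 => le_q.
rewrite -(ler_pM2r (_ : 0 < dot (t u) (t u))) ?dot_gt0 ?t_neq0 //.
exact: le_trans le_q (cauchy_schwarz _ _).
Qed.

(* With [W = c.P p], [q (K W p)] is a quadratic in [K] with leading coefficient
   [W^2 (W^2 - beta^2 |P p|^2) > 0]. *)
Lemma feasible_of_neg_eigenvalue lam : lam < 0 -> eigenvalue F lam -> feasible.
Proof.
move=> lam_lt0 /(eigenvalue_col symF) [p p0 Fp].
set W := dot c (P *m p); set Q := dot (P *m p) (P *m p); set h := dot e (P *m p).
have gap : 0 < W ^+ 2 - beta ^+ 2 * Q.
  have eq : lam * dot p p = beta ^+ 2 * Q - W ^+ 2.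
    by rewrite -dotZr -Fp dot_F -/W -/Q [W ^+ 2]expr2.
  by have := dot_gt0 p; rewrite p0; nra.
have W2_gt0 : 0 < W ^+ 2.
  by apply: lt_le_trans gap _; rewrite gerDl oppr_le0 mulr_ge0 ?sqr_ge0 ?dot_ge0.
have [s0 qs] := quadratic_eventually_ge0 (2 * W * (a * W - beta ^+ 2 * h))
  (a ^+ 2 - beta ^+ 2 * dot e e) (mulr_gt0 W2_gt0 gap).
set K := Num.max s0 (`|a| / W ^+ 2).
have ct : dot c (t ((K * W) *: p)) = a + K * W ^+ 2.
  by rewrite dot_c_tE mulb_dot -scalemxAr dotZr -/W -mulrA -expr2.
exists ((K * W) *: p); split.
  have : `|a| / W ^+ 2 <= K by rewrite le_max lexx orbT.
  rewrite ct ler_pdivrMr // => aK; have := ler_norm (- a); rewrite normrN; lra.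
rewrite /q ct -scalemxAr dot_expand -/Q -/h.
have := qs K; rewrite le_max lexx => /(_ isT); congr (_ <= _); ring.
Qed.

Local Notation Y := (P^T *m (a *: c - beta ^+ 2 *: e)).

Lemma q_addr (u w : 'cV[R]_m) :
  q (u + w) = q u + 2 * dot w (Y - F *m u) - dot w (F *m w).
Proof.
rewrite /q; have -> : t (u + w) = t u + P *m w by rewrite mulmxDr addrA.
rewrite dotBr !dot_F [dot w Y]dot_mulmxr trmxK dotBr !dotZr.
rewrite !dotDr !dotDl -aE (dotC (P *m w) c) (dotC (P *m w) e).
rewrite (dotC (P *m w) (P *m u)) (dotC (P *m u) e); ring.
Qed.

Section PositiveMinEigenvalue.
Variable lam : R.
Hypotheses (lam_gt0 : 0 < lam) (minF : is_min_eigenvalue F lam).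

Lemma posform_F : posform F.
Proof.
move=> w w0; rewrite ltNge; apply/negP => Fw_le0.
have bG := posdefZ (exprn_gt0 2 beta_gt0) G_posdef.
have := sub_rank1_eigenvalue_le0 (x := b^T) bG w0; rewrite trmxK.
case/(_ Fw_le0) => mu mu_le0 /minF.2.
by rewrite leNgt (le_lt_trans mu_le0 lam_gt0).
Qed.

Definition ustar := invmx F *m Y.

Lemma q_ustar_addr w : q (ustar + w) = q ustar - dot w (F *m w).
Proof.
rewrite q_addr mulKVmx ?subrr ?dot0r ?mulr0 ?addr0 //.
exact: posform_unitmx posform_F.
Qed.

Lemma q_le_ustar u : q u <= q ustar.
Proof.
have := q_ustar_addr (u - ustar); rewrite addrC subrK => ->.
by rewrite gerBl posform_ge0 //; apply: posform_F.
Qed.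

Lemma ustar_gapE :
  a - (b *m invmx F *m (beta ^+ 2 *: (P^T *m e) - b^T *m a%:M)) 0 0 = dot c (t ustar).
Proof.
have -> : beta ^+ 2 *: (P^T *m e) - b^T *m a%:M = - Y.
  by rewrite mul_mx_scalar trmx_b mulmxBr -!scalemxAr opprB.
by rewrite mulmxN -mulmxA mxE opprK -dot_c_tE.
Qed.

(* Otherwise [c.t] vanishes on the segment from [ustar] to a feasible point,
   where [q] stays nonnegative, contradicting [q_lt0]. *)
Lemma ustar_ge0_of_feasible : feasible -> 0 <= dot c (t ustar).
Proof.
move=> [u0 [cu0 qu0]]; rewrite leNgt; apply/negP => cus_lt0.
set d := u0 - ustar; have u0E : u0 = ustar + d by rewrite addrC subrK.
have ct_addr s : dot c (t (ustar + s *: d)) = dot c (t ustar) + s * dot c (P *m d).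
  by rewrite mulmxDr addrA dotDr -scalemxAr dotZr.
have := ct_addr 1; rewrite scale1r -u0E mul1r => cu0E.
set rho := - dot c (t ustar) / dot c (P *m d).
have cPd_gt0 : 0 < dot c (P *m d) by lra.
have rho_gt0 : 0 < rho by rewrite divr_gt0 // oppr_gt0.
have rho_le1 : rho <= 1 by rewrite ler_pdivrMr // mul1r; lra.
have : dot c (t (ustar + rho *: d)) = 0.
  by rewrite ct_addr /rho; field; rewrite gt_eqF.
move/q_lt0; rewrite q_ustar_addr -scalemxAr dotZl dotZr.
move: qu0; rewrite u0E q_ustar_addr.
have D_ge0 := posform_ge0 d posform_F.
have : rho * (rho * dot d (F *m d)) <= dot d (F *m d).
  have rhoD_ge0 := mulr_ge0 (ltW rho_gt0) D_ge0.
  exact: le_trans (ler_piMl rhoD_ge0 rho_le1) (ler_piMl D_ge0 rho_le1).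
lra.
Qed.

Lemma exists_q_ge0 : beta ^+ 2 <= dot c c -> exists u, 0 <= q u.
Proof.
move=> norm_c; set z := invmx S *m c.
have := mulS_colE z; rewrite mulKVmx //.
set z0 := usubmx z 0 0; set zr := dsubmx z => cE.
have [z00 | z0_neq0] := eqVneq z0 0.
  rewrite z00 scale0r add0r in cE.
  have zr0 : zr != 0.
    apply: contraTneq norm_c => zr0; rewrite -ltNge cE zr0 mulmx0 dot0r.
    by rewrite exprn_gt0.
  have := posform_F zr0; rewrite dot_F -cE.
  by have := dot_ge0 c; nra.
exists (z0^-1 *: zr); rewrite /q.
have -> : t (z0^-1 *: zr) = z0^-1 *: c.
  by rewrite cE scalerDr scalerA mulVf // scale1r -scalemxAr.
rewrite dotZr dotZl dotZr.
suff -> : (z0^-1 * dot c c) ^+ 2 - beta ^+ 2 * (z0^-1 * (z0^-1 * dot c c)) =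
    z0^-1 ^+ 2 * dot c c * (dot c c - beta ^+ 2).
  by rewrite mulr_ge0 ?subr_ge0 // mulr_ge0 ?sqr_ge0 ?dot_ge0.
by ring.
Qed.

Lemma feasible_of_ustar_ge0 :
  beta ^+ 2 <= dot c c -> 0 <= dot c (t ustar) -> feasible.
Proof.
move=> /exists_q_ge0 [u qu] cus; exists ustar; split=> //.
exact: le_trans qu (q_le_ustar u).
Qed.

End PositiveMinEigenvalue.

Lemma unitG : G \in unitmx.
Proof. by have /posdefP[_ /posform_unitmx] := G_posdef. Qed.

(* [P *m r] below is the orthogonal projection of [c] onto the range of [P]. *)
Section SingularF.
Variable r : 'cV[R]_m.
Hypotheses (Gr : G *m r = P^T *m c) (norm_g : dot (P *m r) (P *m r) = beta ^+ 2).
Local Notation g := (P *m r).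

Lemma dot_g_P (u : 'cV[R]_m) : dot g (P *m u) = dot c (P *m u).
Proof. by rewrite !dot_mulmxr mulmxA Gr. Qed.

Lemma proj_gapE : a - (b *m invmx G *m P^T *m e) 0 0 = a - dot g e.
Proof.
have rE : invmx G *m b^T = r by rewrite trmx_b -Gr mulKmx ?unitG.
have -> : b *m invmx G = r^T.
  by rewrite -rE trmx_mul trmxK trmx_inv trmx_mul trmxK.
by rewrite -trmx_mul.
Qed.

(* Otherwise [c.t u0 <= g.t u0 <= beta |t u0|] is an equality case of
   Cauchy-Schwarz, which puts [t u0] in the range of [P]. *)
Lemma proj_gap_gt0_of_feasible : feasible -> 0 < a - dot g e.
Proof.
move=> [u0 [cu0 qu0]]; rewrite ltNge; apply/negP => gap_le0.
have g0 : g != 0 by rewrite -dot_gt0 norm_g exprn_gt0.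
have ct_le : dot c (t u0) <= dot g (t u0).
  by rewrite !dotDr dot_g_P -aE lerD2r -subr_le0.
have : dot g g * dot (t u0) (t u0) <= dot (t u0) g ^+ 2.
  move: qu0; rewrite /q norm_g subr_ge0 (dotC (t u0)) => /le_trans; apply.
  by rewrite ler_sqr ?nnegrE // (le_trans cu0).
move/(cauchy_schwarz_eq g0); set kappa := _ / _ => tE.
have := t_neq0 (u0 - kappa *: r).
by rewrite mulmxBr -scalemxAr addrA tE subrr eqxx.
Qed.

Lemma feasible_of_proj_gap_gt0 : 0 < a - dot g e -> feasible.
Proof.
move=> gap_gt0; set K := a - dot g e.
set u1 := invmx G *m (P^T *m e); set ep := e - P *m u1.
have Gu1 : G *m u1 = P^T *m e by rewrite mulKVmx ?unitG.
have gPu1 : dot (P *m u1) g = dot e g by rewrite !dot_mulmxr mulmxA Gu1.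
set s := dot ep ep / (2 * K).
have sK : 2 * K * s = dot ep ep by rewrite mulrC divfK // mulf_neq0 ?pnatr_eq0 ?gt_eqF.
have tE : t (s *: r - u1) = ep + s *: g.
  by rewrite mulmxBr -scalemxAr [s *: _ - _]addrC addrA.
have ct : dot c (t (s *: r - u1)) = K + s * beta ^+ 2.
  rewrite dot_c_tE mulb_dot mulmxBr -scalemxAr dotBr dotZr -!dot_g_P norm_g.
  by rewrite dotC gPu1 (dotC e) /K; ring.
have ep_g : dot ep g = 0 by rewrite dotBl gPu1 subrr.
exists (s *: r - u1); rewrite /q ct tE dot_expand ep_g norm_g mulr0 addr0; split.
  have s_ge0 : 0 <= s by rewrite divr_ge0 ?dot_ge0 // mulr_ge0 // ltW.
  exact: addr_ge0 (ltW gap_gt0) (mulr_ge0 s_ge0 (sqr_ge0 _)).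
suff -> : (K + s * beta ^+ 2) ^+ 2 - beta ^+ 2 * (dot ep ep + s ^+ 2 * beta ^+ 2)
  = K ^+ 2 by rewrite sqr_ge0.
by rewrite -sK; ring.
Qed.

End SingularF.

Lemma singular_F_proj : eigenvalue F 0 ->
  exists r, G *m r = P^T *m c /\ dot (P *m r) (P *m r) = beta ^+ 2.
Proof.
case/(eigenvalue_col symF) => p p0; rewrite scale0r => Fp; set W := dot c (P *m p).
have W2 : W ^+ 2 = beta ^+ 2 * dot (P *m p) (P *m p).
  by apply/eqP; rewrite eq_sym -subr_eq0 -dot_F Fp dot0r.
have W0 : W != 0.
  apply: contraNneq p0 => W0; move: W2; rewrite W0 expr0n => /esym/eqP.
  by rewrite mulf_eq0 expf_eq0 gt_eqF //= dot_eq0 mulP_eq0.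
have GpE : beta ^+ 2 *: (G *m p) = W *: (P^T *m c).
  by apply/eqP; rewrite -subr_eq0 -mul_bTb scalemxAl -mulmxBl Fp.
have beta2_neq0 : beta ^+ 2 != 0 by rewrite expf_neq0 ?gt_eqF.
exists ((beta ^+ 2 / W) *: p); split.
  by rewrite -scalemxAr mulrC -scalerA GpE scalerA mulVf // scale1r.
rewrite -scalemxAr dotZl dotZr.
have -> : dot (P *m p) (P *m p) = W ^+ 2 / beta ^+ 2.
  by rewrite W2 [beta ^+ 2 * _]mulrC mulfK.
by field; rewrite W0 gt_eqF.
Qed.

Theorem feasible_iff lam : is_min_eigenvalue F lam ->
  (feasible <-> (beta ^+ 2 <= dot c c /\
    (lam < 0 \/
     (0 < lam /\
      0 <= a - (b *m invmx F *m (beta ^+ 2 *: (P^T *m e) - b^T *m a%:M)) 0 0) \/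
     (lam = 0 /\ 0 < a - (b *m invmx G *m P^T *m e) 0 0)))).
Proof.
move=> minF; split=> [feas | [norm_c [lam_lt0 | [[lam_gt0 gap] | [lam0 gap]]]]].
- split; first exact: feasible_norm.
  have [lam_lt0 | lam_gt0 | lam0] := ltgtP lam 0; [by left | right; left | right; right].
    by rewrite ustar_gapE; split=> //; apply: ustar_ge0_of_feasible lam_gt0 minF feas.
  rewrite lam0 in minF; have [r [Gr norm_g]] := singular_F_proj minF.1.
  by rewrite (proj_gapE Gr); split=> //; apply: proj_gap_gt0_of_feasible.
- exact: feasible_of_neg_eigenvalue minF.1.
- by move: gap; rewrite ustar_gapE; apply: feasible_of_ustar_ge0 lam_gt0 minF norm_c.
- rewrite lam0 in minF; have [r [Gr norm_g]] := singular_F_proj minF.1.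
  by move: gap; rewrite (proj_gapE Gr); apply: feasible_of_proj_gap_gt0.
Qed.

End SecondOrderCone.

Section GaussianProcessCBF.
Variables (R : rcfType) (n m N : nat) (k : 'I_(1 + m) -> 'rV[R]_n -> 'rV[R]_n -> R).
Variables (xs : 'I_N -> 'rV[R]_n) (us : 'I_N -> 'cV[R]_m) (z : 'cV[R]_N) (sigma_n : R).
Variables (B : 'rV[R]_n -> R) (gradB : 'rV[R]_n -> 'rV[R]_n).
Variables (ft : 'rV[R]_n -> 'cV[R]_n) (gt : 'rV[R]_n -> 'M[R]_(n, m)).
Variables (gamma : R -> R) (beta : R) (x : 'rV[R]_n).

Lemma socp_constraintE (u : 'cV[R]_m) :
  socp_constraint k xs us z sigma_n B gradB ft gt gamma beta x u <->
  beta * sigmaB k xs us sigma_n x u <=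
    hatLfB k xs us z sigma_n gradB ft x + gamma (B x) +
    (hatLgB k xs us z sigma_n gradB gt x *m u) 0 0.
Proof.
set mBx := mB k xs us z sigma_n x.
have muE : muB k xs us z sigma_n x u = (usubmx mBx) 0 0 + ((dsubmx mBx)^T *m u) 0 0.
  rewrite /muB -/mBx -{1}(vsubmxK mBx) tr_col_mx mul_row_col mulmx1 mxE.
  by rewrite [(usubmx mBx)^T 0 0]mxE.
rewrite /socp_constraint /hatLfB /hatLgB -/mBx muE mulmxDl [(_ *m u + _) 0 0]mxE.
by split; lra.
Qed.

Lemma sigmaBE (S : 'M[R]_(1 + m)) (u : 'cV[R]_m) :
  S^T = S -> S *m S = SigmaB k xs us sigma_n x ->
  sigmaB k xs us sigma_n x u = Num.sqrt (dot (S *m col_mx 1 u) (S *m col_mx 1 u)).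
Proof. by move=> symS SS; rewrite /sigmaB -SS /dot trmx_mul symS !mulmxA. Qed.

End GaussianProcessCBF.

Unset Implicit Arguments.
Set Strict Implicit.

Theorem theorem2 (R : rcfType) (n m N : nat)
  (k : 'I_(1 + m) -> 'rV[R]_n -> 'rV[R]_n -> R)
  (xs : 'I_N -> 'rV[R]_n) (us : 'I_N -> 'cV[R]_m) (z : 'cV[R]_N) (sigma_n : R)
  (B : 'rV[R]_n -> R) (gradB : 'rV[R]_n -> 'rV[R]_n)
  (ft : 'rV[R]_n -> 'cV[R]_n) (gt : 'rV[R]_n -> 'M[R]_(n, m))
  (gamma : R -> R) (beta : R) (x : 'rV[R]_n)
  (Hm : (0 < m)%N) (Hsn : 0 < sigma_n) (Hbeta : 0 < beta)
  (HSigma : posdef (SigmaB k xs us sigma_n x))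
  (* S = Sigma_B^{1/2}, the symmetric positive definite square root *)
  (S : 'M[R]_(1 + m)) (HS : posdef S) (HS2 : S *m S = SigmaB k xs us sigma_n x)
  (lam : R) :
  let Sig := SigmaB k xs us sigma_n x in
  let a := hatLfB k xs us z sigma_n gradB ft x + gamma (B x) in
  let b := hatLgB k xs us z sigma_n gradB gt x in
  let SLf := lsubmx S in           (* Sigma_{L_fB}^{1/2}, first column *)
  let SLg := rsubmx S in           (* Sigma_{L_gB}^{1/2}, columns 2..m+1 *)
  let SigLg := SLg^T *m SLg in     (* Sigma_{L_gB} *)
  let F := beta ^+ 2 *: SigLg - b^T *m b in
  let v := col_mx (a%:M : 'M[R]_1) b^T in
  is_min_eigenvalue F lam ->
  (socp_feasible k xs us z sigma_n B gradB ft gt gamma beta x <->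
   (beta ^+ 2 <= (v^T *m invmx Sig *m v) 0 0 /\
    (lam < 0 \/
     (0 < lam /\
      0 <= a - (b *m invmx F *m (beta ^+ 2 *: (SLg^T *m SLf) - b^T *m a%:M)) 0 0) \/
     (lam = 0 /\
      0 < a - (b *m invmx SigLg *m SLg^T *m SLf) 0 0)))).
Proof.
move=> Sig a b SLf SLg SigLg F v minF.
have /posdefP [symS posS] := HS; have unitS := posform_unitmx posS.
set c := invmx S *m v.
have [aE bE] : a = dot c SLf /\ b = c^T *m SLg.
  by apply: col_mx_sym_mulmxE; rewrite ?mulKVmx.
rewrite /Sig -HS2 (quad_invmx_sqr _ symS unitS) -/c.
rewrite -(feasible_iff Hbeta unitS aE bE minF) (feasibleE Hbeta aE bE).
split=> -[u feas_u]; exists u; move: feas_u;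
  by rewrite socp_constraintE (sigmaBE _ symS HS2).
Qed.
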